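(* Let $U\subset\mathbb{R}^s$ be open, $X:U\to\mathbb{R}^{n+1}_1$ a spacelike embedding, $M=X(U)$, and $n^T$ a smooth future directed unit timelike normal field along $M$. The following are equivalent: (1) there is a smooth unit spacelike normal field $n^S$ along $M$ with $\langle n^S,n^T\rangle=0$ such that the normalized lightcone Gauss map $\widetilde{\mathbb{LG}}(n^T,n^S)$ is constant; (2) there exist $v\in\mathbb{S}^{n-1}_+$ and $c\in\mathbb{R}$ such that $M\subset HP(v,c)$. Moreover, if these conditions hold (with $n^S$ as in (1)), then $M$ is totally $(n^T,n^S)$-flat, i.e. the lightcone shape operator $S_p(n^T,n^S)$ vanishes at every $p\in M$.
   Context: $\mathbb{R}^{n+1}_1$ is $\mathbb{R}^{n+1}$ with $\langle x,y\rangle=-x_0y_0+\sum_{i=1}^n x_iy_i$. Spacelike embedding: tangent spaces consist of spacelike vectors. Normal fields take values in the pseudo-orthogonal complement $N_p(M)$ of $T_pM$. Future directed unit timelike: $\langle n^T,n^T\rangle=-1$, $n^T_0>0$; unit spacelike: $\langle n^S,n^S\rangle=1$. $\mathbb{S}^{n-1}_+=\{x:\langle x,x\rangle=0,\ x_0=1\}$; for nonzero lightlike $x$, $\widetilde x=x/x_0\in\mathbb{S}^{n-1}_+$. $\widetilde{\mathbb{LG}}(n^T,n^S)(u)=\widetilde{n^T(u)+n^S(u)}$. $HP(v,c)=\{x:\langle x,v\rangle=c\}$. With $\pi^\tau:T_pM\oplus N_p(M)\to T_pM$ the projection, $S_p(n^T,n^S)=-\pi^\tau\circ d_p(n^T+n^S)$.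 A point is $(n^T,n^S)$-umbilical if $S_p(n^T,n^S)$ is a scalar multiple of the identity, and $(n^T,n^S)$-flat if moreover $\det S_p(n^T,n^S)=0$ (equivalently $S_p(n^T,n^S)=0$). *)

From HB Require Import structures.
From mathcomp Require Import all_boot all_order all_algebra.
From mathcomp Require Import all_classical all_reals all_analysis.
Set Implicit Arguments. Unset Strict Implicit. Unset Printing Implicit Defensive.
Import Order.TTheory GRing.Theory Num.Theory.
Import numFieldNormedType.Exports.
Local Open Scope classical_set_scope.
Local Open Scope ring_scope.

(* Points of R^{n+1}_1 are row vectors 'rV[R]_(n.+1); coordinate x_0 is x 0 ord0.
   Points of R^s are row vectors 'rV[R]_s. *)

Definition lprod {R : realType} {n : nat} (x y : 'rV[R]_(n.+1)) : R :=
  - (x 0 ord0 * y 0 ord0) + \sum_(i < n.+1 | i != ord0) x 0 i * y 0 i.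

Fixpoint Ck_on {R : realType} {s : nat} {W : normedModType R}
    (k : nat) (U : set 'rV[R]_s) (f : 'rV[R]_s -> W) : Prop :=
  match k with
  | 0 => forall u, U u -> {for u, continuous f}
  | k'.+1 => (forall u, U u -> differentiable f u) /\
             (forall i : 'I_s, Ck_on k' U ('D_(delta_mx 0 i) f))
  end.

Definition smooth_on {R : realType} {s : nat} {W : normedModType R}
    (U : set 'rV[R]_s) (f : 'rV[R]_s -> W) : Prop :=
  forall k, Ck_on k U f.

Definition tangent_space {R : realType} {s n : nat}
    (X : 'rV[R]_s -> 'rV[R]_(n.+1)) (u : 'rV[R]_s) : set 'rV[R]_(n.+1) :=
  [set t | exists w, t = 'd X u w].

Definition normal_space {R : realType} {s n : nat}
    (X : 'rV[R]_s -> 'rV[R]_(n.+1)) (u : 'rV[R]_s) : set 'rV[R]_(n.+1) :=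
  [set y | forall t, tangent_space X u t -> lprod y t = 0].

Definition spacelike_embedding {R : realType} {s n : nat}
    (U : set 'rV[R]_s) (X : 'rV[R]_s -> 'rV[R]_(n.+1)) : Prop :=
  [/\ smooth_on U X,
      {in U &, injective X},
      (* the inverse X(U) -> U is continuous *)
      (forall u, U u -> forall e : R, 0 < e -> exists2 d : R, 0 < d &
          forall u', U u' -> `|X u' - X u| < d -> `|u' - u| < e) &
      (forall u, U u -> forall t, tangent_space X u t -> t != 0 -> 0 < lprod t t)].

Definition future_unit_timelike_normal {R : realType} {s n : nat}
    (U : set 'rV[R]_s) (X : 'rV[R]_s -> 'rV[R]_(n.+1))
    (nT : 'rV[R]_s -> 'rV[R]_(n.+1)) : Prop :=
  smooth_on U nT /\
  forall u, U u -> [/\ normal_space X u (nT u), lprod (nT u) (nT u) = -1 &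
                       0 < nT u 0 ord0].

Definition unit_spacelike_normal_orth {R : realType} {s n : nat}
    (U : set 'rV[R]_s) (X : 'rV[R]_s -> 'rV[R]_(n.+1))
    (nT nS : 'rV[R]_s -> 'rV[R]_(n.+1)) : Prop :=
  smooth_on U nS /\
  forall u, U u -> [/\ normal_space X u (nS u), lprod (nS u) (nS u) = 1 &
                       lprod (nS u) (nT u) = 0].

Definition lightcone_sphere {R : realType} {n : nat} : set 'rV[R]_(n.+1) :=
  [set x | lprod x x = 0 /\ x 0 ord0 = 1].

Definition normalize_lc {R : realType} {n : nat} (x : 'rV[R]_(n.+1)) : 'rV[R]_(n.+1) :=
  (x 0 ord0)^-1 *: x.

Definition nLG {R : realType} {s n : nat} (nT nS : 'rV[R]_s -> 'rV[R]_(n.+1))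
    (u : 'rV[R]_s) : 'rV[R]_(n.+1) := normalize_lc (nT u + nS u).

Definition HP {R : realType} {n : nat} (v : 'rV[R]_(n.+1)) (c : R) : set 'rV[R]_(n.+1) :=
  [set x | lprod x v = c].

Definition tangent_proj {R : realType} {s n : nat}
    (X : 'rV[R]_s -> 'rV[R]_(n.+1)) (u : 'rV[R]_s) (y : 'rV[R]_(n.+1)) : 'rV[R]_(n.+1) :=
  xget 0 [set t | tangent_space X u t /\ normal_space X u (y - t)].

Definition dX_inv {R : realType} {s n : nat}
    (X : 'rV[R]_s -> 'rV[R]_(n.+1)) (u : 'rV[R]_s) (xi : 'rV[R]_(n.+1)) : 'rV[R]_s :=
  xget 0 [set w | 'd X u w = xi].

(* lightcone shape operator S_p(nT,nS) = - pi^tau o d_p(nT+nS) at p = X u,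
   acting on xi in T_pM (d_p(nT+nS)(dX_u w) = d(nT+nS)_u(w)) *)
Definition lc_shape_operator {R : realType} {s n : nat}
    (X : 'rV[R]_s -> 'rV[R]_(n.+1)) (nT nS : 'rV[R]_s -> 'rV[R]_(n.+1))
    (u : 'rV[R]_s) (xi : 'rV[R]_(n.+1)) : 'rV[R]_(n.+1) :=
  - tangent_proj X u ('d (nT \+ nS) u (dX_inv X u xi)).

From Pilot Require Import Defs.
From HB Require Import structures.
From mathcomp Require Import all_boot all_order all_algebra.
From mathcomp Require Import all_classical all_reals all_analysis.
From mathcomp Require Import ring lra.
Set Implicit Arguments. Unset Strict Implicit. Unset Printing Implicit Defensive.
Import Order.TTheory GRing.Theory Num.Theory.
Import numFieldNormedType.Exports.
Local Open Scope classical_set_scope.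
Local Open Scope ring_scope.

(* MathComp-Analysis also has a (topological) [normal_space]. *)
Local Notation normal_space := Defs.normal_space.

(* If nT + nS = c w for a fixed lightlike w, then w is normal to M, so u |-> <X u, w> has
   zero differential and is constant on the connected set U: M lies in HP(w, c). Conversely,
   if <X, v> is constant then v is normal, <nT, v> < 0 by the reverse Cauchy-Schwarz
   inequality, and nS := v / (-<nT, v>) - nT is a unit spacelike normal orthogonal to nT with
   nT + nS parallel to v. In the first situation d(nT + nS) = dc . w is normal, so its
   tangential projection, the lightcone shape operator, vanishes. *)

Section lorentz_product.
Context {R : realType} {n : nat}.
Implicit Types (x y z : 'rV[R]_n.+1) (a : R).

Lemma lprodC x y : lprod x y = lprod y x.
Proof.
rewrite /lprod mulrC; congr (_ + _); apply: eq_bigr => i _; exact: mulrC.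
Qed.

Lemma lprodDl x y z : lprod (x + y) z = lprod x z + lprod y z.
Proof.
rewrite /lprod !mxE mulrDl opprD -addrACA; congr (_ + _).
by rewrite -big_split; apply: eq_bigr => i _; rewrite mxE mulrDl.
Qed.

Lemma lprodZl a x z : lprod (a *: x) z = a * lprod x z.
Proof.
rewrite /lprod !mxE mulrDr mulr_sumr mulrN mulrA; congr (_ + _).
by apply: eq_bigr => i _; rewrite mxE mulrA.
Qed.

Lemma lprodNl x z : lprod (- x) z = - lprod x z.
Proof. by rewrite -scaleN1r lprodZl mulN1r. Qed.

Lemma lprodBl x y z : lprod (x - y) z = lprod x z - lprod y z.
Proof. by rewrite lprodDl lprodNl. Qed.

Lemma lprodDr x y z : lprod z (x + y) = lprod z x + lprod z y.
Proof. by rewrite !(lprodC z) lprodDl. Qed.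

Lemma lprodZr a x z : lprod z (a *: x) = a * lprod z x.
Proof. by rewrite !(lprodC z) lprodZl. Qed.

Lemma lprodNr x z : lprod z (- x) = - lprod z x.
Proof. by rewrite !(lprodC z) lprodNl. Qed.

Lemma lprodBr x y z : lprod z (x - y) = lprod z x - lprod z y.
Proof. by rewrite !(lprodC z) lprodBl. Qed.

Lemma lightlike_eq0 x : lprod x x = 0 -> x 0 ord0 = 0 -> x = 0.
Proof.
rewrite /lprod => xx0 x00; rewrite x00 mul0r oppr0 add0r in xx0.
have sq_ge0 (i : 'I_n.+1) : i != ord0 -> 0 <= x 0 i * x 0 i.
  by move=> _; rewrite -expr2 sqr_ge0.
have sq0 := psumr_eq0P sq_ge0 xx0.
apply/rowP => i; rewrite mxE.
have [->|i0] := eqVneq i ord0; first exact: x00.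
by have /eqP := sq0 i i0; rewrite mulf_eq0 orbb => /eqP.
Qed.

(* Reverse Cauchy-Schwarz: expand the nonnegative spatial norm of x - x_0 y. *)
Lemma lprod_timelike_lightcone_lt0 x y :
  lprod x x = -1 -> 0 < x 0 ord0 -> lightcone_sphere y -> lprod x y < 0.
Proof.
move=> + x0_gt0 [+ y01]; rewrite /lprod y01 => xx yy.
set a := x 0 ord0 in xx x0_gt0 *.
set Sx := \sum_(i < n.+1 | i != ord0) x 0 i * x 0 i in xx.
set Sy := \sum_(i < n.+1 | i != ord0) y 0 i * y 0 i in yy.
set S := \sum_(i < n.+1 | i != ord0) x 0 i * y 0 i.
have expand : \sum_(i < n.+1 | i != ord0) (x 0 i - a * y 0 i) ^+ 2
   = Sx - 2 * a * S + a * a * Sy.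
  rewrite /Sx /S /Sy !mulr_sumr -sumrB -big_split /=.
  by apply: eq_bigr => i _; ring.
have : 0 <= \sum_(i < n.+1 | i != ord0) (x 0 i - a * y 0 i) ^+ 2.
  by apply: sumr_ge0 => i _; exact: sqr_ge0.
rewrite expand => sq_ge0.
have Sy1 : Sy = 1 by lra.
have Sx_eq : Sx = a * a - 1 by lra.
rewrite Sy1 Sx_eq in sq_ge0; nra.
Qed.

End lorentz_product.

Definition lprodr {R : realType} {n : nat} (v x : 'rV[R]_n.+1) : R := lprod x v.

Lemma lprodr_is_linear {R : realType} {n : nat} (v : 'rV[R]_n.+1) :
  linear (lprodr v).
Proof. by move=> a x y; rewrite /lprodr lprodDl lprodZl. Qed.

HB.instance Definition _ (R : realType) (n : nat) (v : 'rV[R]_n.+1) :=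
  GRing.isLinear.Build R 'rV[R]_n.+1 R *:%R (lprodr v) (lprodr_is_linear v).

Lemma lprodr_continuous {R : realType} {n : nat} (v : 'rV[R]_n.+1) :
  continuous (lprodr v).
Proof.
have coordM (i : 'I_n.+1) : continuous (fun x : 'rV[R]_n.+1 => x 0 i * v 0 i).
  by move=> x; apply: continuousM; [exact: coord_continuous|exact: cst_continuous].
have -> : lprodr v = (fun x : 'rV[R]_n.+1 => - (x 0 ord0 * v 0 ord0)) +
    (fun x : 'rV[R]_n.+1 => \sum_(i < n.+1 | i != ord0) x 0 i * v 0 i)
    :> ('rV[R]_n.+1 -> R) by [].
move=> x; apply: continuousD; first exact/continuousN/coordM.
by apply: (continuous_big add_continuous) => i _; exact: coordM.
Qed.

Definition scalerl {R : realType} {W : normedModType R} (w : W) (k : R) : W :=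
  k *: w.

Lemma scalerl_is_linear {R : realType} {W : normedModType R} (w : W) :
  linear (scalerl w).
Proof. by move=> a k l; rewrite /scalerl scalerDl scalerA. Qed.

HB.instance Definition _ (R : realType) (W : normedModType R) (w : W) :=
  GRing.isLinear.Build R R W *:%R (scalerl w) (scalerl_is_linear w).

Section near_constant.
Context {R : realType} {V W : normedModType R}.

Lemma near0_differentiable (h : V -> W) (x : V) :
  (\forall y \near x, h y = 0) -> differentiable h x.
Proof.
move=> h0; have hx : h x = 0 by exact: (nbhs_singleton h0).
have h_shift : h \o shift x = cst (h x) + \0 +o_ 0 id.
  apply/eqaddoP => _ /posnumP[e].
  have : \forall y \near 0, h (y + x) = 0.
    move/nbhs_ballP: h0 => [r r0 hr]; apply/nbhs_ballP; exists r => // y.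
    rewrite -ball_normE /= sub0r normrN => yr; apply: hr.
    by rewrite -ball_normE /= opprD addrCA subrr addr0 normrN.
  apply: filter_app; near=> y => hy.
  by rewrite /= !fctE hy hx addr0 subr0 normr0 mulr_ge0.
have dh0 : 'd h x = \0 :> (V -> W) by apply: diff_unique => //; exact: cst_continuous.
by apply/diff_locallyP; rewrite dh0; split; [exact: cst_continuous|exact: h_shift].
Unshelve. all: by end_near. Qed.

Lemma near_eq_differentiable (f g : V -> W) (x : V) :
  (\forall y \near x, f y = g y) -> differentiable f x -> differentiable g x.
Proof.
move=> fg df; have -> : g = f + (g - f) by apply/funext => y; rewrite !fctE addrC subrK.
apply: differentiableD => //; apply: near0_differentiable.
by apply: filterS fg => y; rewrite !fctE => ->; rewrite subrr.
Qed.

Lemma diff_near_cst (f : V -> W) (x : V) (c : W) z :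
  differentiable f x -> (\forall y \near x, f y = c) -> 'd f x z = 0.
Proof. by move=> df fc; rewrite -deriveE // (near_eq_derive _ fc) derive_cst. Qed.

End near_constant.

Section zero_differential.
Context {R : realType} {V : normedModType R}.
Variables (U : set V) (phi : V -> R).
Hypotheses (oU : open U)
  (dphi0 : forall u, U u -> differentiable phi u /\ forall z, 'd phi u z = 0).

(* Mean value theorem along the segment [a, b], which stays in a ball inside U. *)
Lemma diff0_near_eq a : U a -> \forall b \near a, U b /\ phi b = phi a.
Proof.
move=> Ua; move: (open_nbhs_nbhs (conj oU Ua)) => /nbhs_ballP [r r0 aU].
apply/nbhs_ballP; exists r => // b ab; split; first exact: aU.
pose g t : V := a + t *: (b - a).
have gU (t : R) : 0 <= t <= 1 -> U (g t).
  move=> /andP [t0 t1]; apply: aU; move: ab; rewrite -!ball_normE /= /g => ab.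
  rewrite opprD addrA subrr sub0r normrN normrZ ger0_norm //.
  rewrite (le_lt_trans _ ab) // -normrN opprB.
  by rewrite -[leRHS]mul1r ler_wpM2r.
have dg (t : R) : differentiable g t.
  apply: differentiableD; first exact: differentiable_cst.
  by apply: (@differentiableZl _ _ _ id); exact: ex_diff.
have dphig (t : R) : 0 <= t <= 1 ->
    differentiable (phi \o g) t /\ 'd (phi \o g) t 1 = 0.
  move=> /gU Ug; have [dp dp0] := dphi0 Ug.
  by split; [exact: differentiable_comp | rewrite diff_comp //= dp0].
case: (@MVT_segment R (phi \o g) (fun _ => 0) 0 1 ler01).
- move=> t; rewrite in_itv /= => /andP [t0 t1].
  have [dt dt0] : differentiable (phi \o g) t /\ 'd (phi \o g) t 1 = 0.
    by apply: dphig; rewrite !ltW.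
  by apply: DeriveDef; [exact: diff_derivable | rewrite deriveE].
- apply: continuous_in_subspaceT => t; rewrite inE /= in_itv /= => t01.
  exact/differentiable_continuous/(dphig t t01).1.
move=> c _; rewrite mul0r => /eqP; rewrite subr_eq0 => /eqP.
by rewrite /g /= scale1r scale0r addr0 addrC subrK.
Qed.

Lemma diff0_connected_const : connected U -> forall a b, U a -> U b -> phi b = phi a.
Proof.
move=> cU a b Ua Ub; pose B := [set x | U x /\ phi x = phi a].
suff BU : B = U by have [] : B b by rewrite BU.
apply: cU; first by exists a.
- exists B°; first exact: open_interior.
  apply/seteqP; split => [x Bx|x [Ux /interior_subset //]]; split; first exact: Bx.1.
  have := diff0_near_eq Bx.1; apply: filterS => y [Uy yx].
  by split => //; rewrite yx; exact: Bx.2.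
- exists (closure B); first exact: closed_closure.
  apply/seteqP; split => [x Bx|x [Ux Bx]]; first by split; [exact: Bx.1|exact: subset_closure].
  by split => //; have [y [[_ ->] [_ <-]]] := Bx _ (diff0_near_eq Ux).
Qed.

End zero_differential.

Section Ck_on_closure.
Context {R : realType} {s : nat}.
Local Notation V := 'rV[R]_s.
Variables (U : set V).
Hypothesis oU : open U.

Lemma Ck_on_eq (W : normedModType R) k (f g : V -> W) :
  (forall u, U u -> f u = g u) -> Ck_on k U f -> Ck_on k U g.
Proof.
have near_U u : U u -> \forall y \near u, U y by move=> Uu; exact: open_nbhs_nbhs.
elim: k f g => [|k IH] f g fg /=.
  move=> Cf u Uu; rewrite /prop_for /continuous_at -(fg u Uu).
  apply: cvg_trans (Cf u Uu); apply: (@near_eq_cvg _ _ (nbhs u) _ f g).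
  exact: filterS (near_U u Uu).
move=> [df dDf]; split => [u Uu|i].
  by apply: near_eq_differentiable (df u Uu); exact: filterS (near_U u Uu).
apply: IH (dDf i) => u Uu; apply: near_eq_derive.
exact: filterS (near_U u Uu).
Qed.

Lemma Ck_onS (W : normedModType R) k (f : V -> W) :
  Ck_on k.+1 U f -> Ck_on k U f.
Proof.
elim: k f => [|k IH] f /= [df dDf]; last by split => // i; apply: IH; exact: dDf.
by move=> u Uu; apply: differentiable_continuous; exact: df.
Qed.

Lemma Ck_onD (W : normedModType R) k (f g : V -> W) :
  Ck_on k U f -> Ck_on k U g -> Ck_on k U (f + g).
Proof.
elim: k f g => [|k IH] f g /=.
  by move=> cf cg u Uu; apply: continuousD; [exact: cf|exact: cg].
move=> [df dDf] [dg dDg]; split => [u Uu|i].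
  by apply: differentiableD; [exact: df|exact: dg].
apply: (@Ck_on_eq _ _ ('D_(delta_mx 0 i) f + 'D_(delta_mx 0 i) g)); last exact: IH.
by move=> u Uu; rewrite deriveD //; apply: diff_derivable; [apply: df|apply: dg].
Qed.

Lemma Ck_onN (W : normedModType R) k (f : V -> W) :
  Ck_on k U f -> Ck_on k U (- f).
Proof.
elim: k f => [|k IH] f /=.
  by move=> cf u Uu; apply: continuousN; exact: cf.
move=> [df dDf]; split => [u Uu|i]; first by apply: differentiableN; exact: df.
apply: (@Ck_on_eq _ _ (- 'D_(delta_mx 0 i) f)); last exact: IH.
by move=> u Uu; rewrite deriveN //; apply: diff_derivable; exact: df.
Qed.

Lemma Ck_onM k (f g : V -> R) :
  Ck_on k U f -> Ck_on k U g -> Ck_on k U (fun x => f x * g x).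
Proof.
elim: k f g => [|k IH] f g /=.
  by move=> cf cg u Uu; apply: continuousM; [exact: cf|exact: cg].
move=> [df dDf] [dg dDg]; split => [u Uu|i].
  by apply: (@differentiableM _ _ f g); [exact: df|exact: dg].
apply: (@Ck_on_eq _ _ ((fun x => f x * 'D_(delta_mx 0 i) g x) +
                       (fun x => g x * 'D_(delta_mx 0 i) f x))).
  move=> u Uu; rewrite (@deriveM _ _ f g) //; apply: diff_derivable;
    by [apply: df|apply: dg].
by apply: Ck_onD; apply: IH => //; apply: Ck_onS; split.
Qed.

Lemma Ck_on_comp_linear (W W' : normedModType R) k (L : {linear W -> W'})
  (f : V -> W) : continuous L -> Ck_on k U f -> Ck_on k U (L \o f).
Proof.
move=> cL; elim: k f => [|k IH] f /=.
  by move=> cf u Uu; apply: continuous_comp; [exact: cf|exact: cL].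
have dL x : differentiable L x by exact: linear_differentiable.
move=> [df dDf]; split => [u Uu|i]; first by apply: differentiable_comp; [exact: df|exact: dL].
apply: (@Ck_on_eq _ _ (L \o 'D_(delta_mx 0 i) f)); last exact: IH.
move=> u Uu; have dfu := df u Uu.
have dLf : differentiable (L \o f) u by exact: differentiable_comp.
by rewrite /= deriveE // [RHS]deriveE // (diff_comp dfu (dL _)) /= (diff_lin _ cL).
Qed.

Lemma Ck_onV k (g : V -> R) :
  (forall u, U u -> g u != 0) -> Ck_on k U g -> Ck_on k U (fun x => (g x)^-1).
Proof.
move=> g0; elim: k => [|k IH] /=.
  by move=> cg u Uu; apply: continuousV; [exact: g0|exact: cg].
move=> Cg; have [dg dDg] := Cg; split => [u Uu|i].
  by apply: differentiableV; [exact: dg|exact: g0].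
apply: (@Ck_on_eq _ _ (fun x => - ((g x)^-1 * (g x)^-1) * 'D_(delta_mx 0 i) g x)).
  move=> u Uu; rewrite deriveV; [|exact: g0|by apply: diff_derivable; exact: dg].
  by rewrite -invfM -expr2.
apply: Ck_onM (dDg i); apply: (@Ck_onN _ _ (fun x => (g x)^-1 * (g x)^-1)).
by apply: Ck_onM; exact: IH (Ck_onS Cg).
Qed.

Lemma Ck_onZl (W : normedModType R) k (g : V -> R) (w : W) :
  Ck_on k U g -> Ck_on k U (fun x => g x *: w).
Proof.
have -> : (fun x => g x *: w) = scalerl w \o g by [].
exact/Ck_on_comp_linear/scalel_continuous.
Qed.

Lemma Ck_on_lprod n k (f : V -> 'rV[R]_n.+1) (v : 'rV[R]_n.+1) :
  Ck_on k U f -> Ck_on k U (fun x => lprod (f x) v).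
Proof.
have -> : (fun x => lprod (f x) v) = lprodr v \o f by [].
exact/Ck_on_comp_linear/lprodr_continuous.
Qed.

End Ck_on_closure.

Section normal_space.
Context {R : realType} {s n : nat}.
Variables (X : 'rV[R]_s -> 'rV[R]_n.+1) (u : 'rV[R]_s).

Lemma normal_spaceD y1 y2 : normal_space X u y1 -> normal_space X u y2 ->
  normal_space X u (y1 + y2).
Proof. by move=> h1 h2 t Tt; rewrite lprodDl h1 // h2 // addr0. Qed.

Lemma normal_spaceZ a y : normal_space X u y -> normal_space X u (a *: y).
Proof. by move=> h t Tt; rewrite lprodZl h // mulr0. Qed.

Lemma normal_spaceN y : normal_space X u y -> normal_space X u (- y).
Proof. by move=> h t Tt; rewrite lprodNl h // oppr0. Qed.

(* Spacelike tangent vectors make T_pM and N_p(M) intersect trivially. *)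
Lemma tangent_proj_normal y :
  (forall t, tangent_space X u t -> t != 0 -> 0 < lprod t t) ->
  normal_space X u y -> tangent_proj X u y = 0.
Proof.
move=> spacelike Ny; apply: xget_unique.
  by split; [exists 0; rewrite linear0 | rewrite subr0].
move=> t [Tt Nyt]; apply/eqP; apply: contraT => t0.
have Nt : normal_space X u t.
  by have := normal_spaceD Ny (normal_spaceN Nyt); rewrite opprB addrC subrK.
by have := spacelike t Tt t0; rewrite (Nt t Tt) ltxx.
Qed.

Lemma diff_lprodr v : differentiable X u ->
  differentiable (lprodr v \o X) u /\
  forall z, 'd (lprodr v \o X) u z = lprod ('d X u z) v.
Proof.
move=> dX; have cL := @lprodr_continuous R n v.
have dL : differentiable (lprodr v) (X u) by exact: linear_differentiable.
split; first exact: differentiable_comp.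
by move=> z; rewrite (diff_comp dX dL) /= (diff_lin _ cL).
Qed.

End normal_space.

Section lightcone_vectors.
Context {R : realType} {n : nat}.
Implicit Types (x t e : 'rV[R]_n.+1).

Lemma lprod_unit_sum t e : lprod t t = -1 -> lprod e e = 1 -> lprod e t = 0 ->
  lprod (t + e) (t + e) = 0.
Proof.
move=> tt ee et; rewrite !(lprodDl, lprodDr) tt ee et (lprodC t) et.
by rewrite addr0 add0r addrC subrr.
Qed.

Lemma unit_sum_x0_neq0 t e : lprod t t = -1 -> lprod e e = 1 -> lprod e t = 0 ->
  (t + e) 0 ord0 != 0.
Proof.
move=> tt ee et; apply/eqP => x00.
have /eqP := lightlike_eq0 (lprod_unit_sum tt ee et) x00.
rewrite addr_eq0 => /eqP e_eq; move: tt.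
by rewrite e_eq lprodNl lprodNr opprK ee; lra.
Qed.

Lemma normalize_lcK x : x 0 ord0 != 0 -> x 0 ord0 *: normalize_lc x = x.
Proof. by move=> x0; rewrite /normalize_lc scalerA mulfV // scale1r. Qed.

Lemma lightcone_sphere_normalize_lc x : lprod x x = 0 -> x 0 ord0 != 0 ->
  lightcone_sphere (normalize_lc x).
Proof.
move=> xx x0; rewrite /normalize_lc; split; last by rewrite mxE mulVf.
by rewrite lprodZl lprodZr xx !mulr0.
Qed.

End lightcone_vectors.

Section lightcone_gauss_map.
Context {R : realType} {s n : nat}.
Variables (U : set 'rV[R]_s) (X nT : 'rV[R]_s -> 'rV[R]_n.+1).
Hypotheses (oU : open U) (XU : spacelike_embedding U X)
  (nT_normal : future_unit_timelike_normal U X nT).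

Let dX u : U u -> differentiable X u.
Proof. by case: XU => sX _ _ _ Uu; exact: (sX 1%N).1 u Uu. Qed.

Section constant_gauss_map.
Variables (nS : 'rV[R]_s -> 'rV[R]_n.+1) (w : 'rV[R]_n.+1).
Hypotheses (nS_normal : unit_spacelike_normal_orth U X nT nS)
  (nLG_w : forall u, U u -> nLG nT nS u = w).

Lemma nLG_const_decomp u : U u -> nT u + nS u = (nT u + nS u) 0 ord0 *: w.
Proof.
move=> Uu; have [_ tt _] := nT_normal.2 u Uu; have [_ ee et] := nS_normal.2 u Uu.
by rewrite -(nLG_w Uu) normalize_lcK // unit_sum_x0_neq0.
Qed.

Lemma nLG_const_normal u : U u -> normal_space X u w.
Proof.
move=> Uu; have [NT _ _] := nT_normal.2 u Uu; have [NS _ _] := nS_normal.2 u Uu.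
by rewrite -(nLG_w Uu); exact/normal_spaceZ/normal_spaceD.
Qed.

Lemma nLG_const_lightcone u : U u -> lightcone_sphere w.
Proof.
move=> Uu; have [_ tt _] := nT_normal.2 u Uu; have [_ ee et] := nS_normal.2 u Uu.
rewrite -(nLG_w Uu); apply: lightcone_sphere_normalize_lc.
  exact: lprod_unit_sum.
exact: unit_sum_x0_neq0.
Qed.

Lemma nLG_const_hyperplane : connected U -> U !=set0 ->
  exists c, X @` U `<=` HP w c.
Proof.
move=> cU [u0 Uu0]; exists (lprod (X u0) w) => _ [u Uu <-].
apply: (@diff0_connected_const _ _ U (lprodr w \o X) oU _ cU u0 u Uu0 Uu).
move=> x Ux; have [dXw dXw_eq] := diff_lprodr w (dX Ux); split => // z.
by rewrite dXw_eq lprodC; apply: (nLG_const_normal Ux); exists z.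
Qed.

Lemma nLG_const_flat u xi : U u -> lc_shape_operator X nT nS u xi = 0.
Proof.
move=> Uu; have dnS : differentiable nS u by exact: ((nS_normal.1 1%N).1 u Uu).
have dnT : differentiable nT u by exact: ((nT_normal.1 1%N).1 u Uu).
have dN : differentiable (nT \+ nS) u by exact: differentiableD.
pose c x := (nT \+ nS) x 0 ord0.
have dc : differentiable c u.
  have -> : c = (fun N : 'rV[R]_n.+1 => N 0 ord0) \o (nT \+ nS) by [].
  by apply: differentiable_comp => //; exact: differentiable_coord.
rewrite /lc_shape_operator; set z := dX_inv X u xi.
apply/eqP; rewrite oppr_eq0; apply/eqP; apply: tangent_proj_normal.
  by case: XU => _ _ _; apply.
have -> : 'd (nT \+ nS) u z = 'd c u z *: w.
  rewrite -deriveE // (@near_eq_derive _ _ _ (nT \+ nS) (fun x => c x *: w)).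
    by rewrite deriveE ?diffZl //; exact: differentiableZl.
  by apply: filterS (open_nbhs_nbhs (conj oU Uu)) => x Ux; exact: nLG_const_decomp.
exact/normal_spaceZ/nLG_const_normal.
Qed.

End constant_gauss_map.

Section hyperplane.
Variables (v : 'rV[R]_n.+1) (c : R).
Hypotheses (v_lc : lightcone_sphere v) (XU_HP : X @` U `<=` HP v c).

Lemma hyperplane_normal u : U u -> normal_space X u v.
Proof.
move=> Uu t [z ->]; rewrite lprodC; have [dXv <-] := diff_lprodr v (dX Uu).
apply: (@diff_near_cst _ _ _ _ _ c z dXv).
by apply: filterS (open_nbhs_nbhs (conj oU Uu)) => x Ux; apply: XU_HP; exists x.
Qed.

Lemma lprod_nT_lt0 u : U u -> lprod (nT u) v < 0.
Proof.
by move=> Uu; have [_ tt t0] := nT_normal.2 u Uu; exact: lprod_timelike_lightcone_lt0.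
Qed.

(* The unique nS orthogonal to nT with nT + nS proportional to v. *)
Definition hyperplane_partner u := (- lprod (nT u) v)^-1 *: v - nT u.

Lemma hyperplane_partner_smooth : smooth_on U hyperplane_partner.
Proof.
move=> k; apply: (Ck_onD oU); last exact/(Ck_onN oU)/(nT_normal.1 k).
apply/(Ck_onZl oU)/(Ck_onV oU) => [u Uu|].
  by rewrite oppr_eq0 ltr0_neq0 // lprod_nT_lt0.
exact/(Ck_onN oU)/(Ck_on_lprod oU)/(nT_normal.1 k).
Qed.

Lemma hyperplane_partner_normal : unit_spacelike_normal_orth U X nT hyperplane_partner.
Proof.
split; first exact: hyperplane_partner_smooth.
move=> u Uu; have [NT tt _] := nT_normal.2 u Uu.
have a0 : lprod (nT u) v != 0 by rewrite ltr0_neq0 // lprod_nT_lt0.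
have [vv _] := v_lc; rewrite /hyperplane_partner; split.
- exact/normal_spaceD/normal_spaceN/NT/normal_spaceZ/hyperplane_normal.
- by rewrite !(lprodBl, lprodBr, lprodZl, lprodZr) vv tt (lprodC v); field.
- by rewrite !(lprodBl, lprodZl) tt (lprodC v); field.
Qed.

Lemma nLG_hyperplane_partner u : U u -> nLG nT hyperplane_partner u = v.
Proof.
move=> Uu; have [_ v01] := v_lc.
rewrite /nLG /normalize_lc /hyperplane_partner addrC subrK mxE v01 mulr1.
by rewrite scalerA mulVf ?scale1r // invr_eq0 oppr_eq0 ltr0_neq0 // lprod_nT_lt0.
Qed.

End hyperplane.

End lightcone_gauss_map.

Theorem proposition3p4 (R : realType) (s n : nat) (U : set 'rV[R]_s)
    (X : 'rV[R]_s -> 'rV[R]_(n.+1)) (nT : 'rV[R]_s -> 'rV[R]_(n.+1)) :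
  open U -> connected U -> U !=set0 ->
  spacelike_embedding U X ->
  future_unit_timelike_normal U X nT ->
  ((exists nS, unit_spacelike_normal_orth U X nT nS /\
      exists w, forall u, U u -> nLG nT nS u = w)
   <->
   (exists v c, lightcone_sphere v /\ X @` U `<=` HP v c))
  /\
  (forall nS, unit_spacelike_normal_orth U X nT nS ->
     (exists w, forall u, U u -> nLG nT nS u = w) ->
     forall u, U u -> forall xi, tangent_space X u xi ->
       lc_shape_operator X nT nS u xi = 0).
Proof.
move=> oU cU U0 XU nT_normal; split; [split|].
- move=> [nS [nS_normal [w nLG_w]]]; have [u0 Uu0] := U0.
  have [c XU_HP] := nLG_const_hyperplane oU XU nT_normal nS_normal nLG_w cU U0.
  exists w, c; split => //; exact: (nLG_const_lightcone nT_normal nS_normal nLG_w Uu0).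
- move=> [v [c [v_lc XU_HP]]]; exists (hyperplane_partner nT v); split.
    exact: (hyperplane_partner_normal oU XU nT_normal v_lc XU_HP).
  by exists v => u Uu; exact: (nLG_hyperplane_partner nT_normal v_lc Uu).
- move=> nS nS_normal [w nLG_w] u Uu xi _.
  exact: (nLG_const_flat oU XU nT_normal nS_normal nLG_w xi Uu).
Qed.
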